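(* Let $l_2$ be an odd integer with $l_2\ge 3$ and let $G=\Theta(2,l_2,2)$. Then $P_\ell(G,3)=P(G,3)$.
   Context: For positive integers $l_1,l_2,l_3$, the theta graph $\Theta(l_1,l_2,l_3)$ consists of two end vertices joined by three internally disjoint paths of lengths (numbers of edges) $l_1,l_2,l_3$. A $3$-assignment $L$ for $G$ assigns to each vertex $v$ a set $L(v)$ of $3$ colors; $P(G,L)$ is the number of proper colorings $f$ of $G$ with $f(v)\in L(v)$ for all $v$. $P(G,3)$ is the number of proper colorings of $G$ with colors from $\{1,2,3\}$, and $P_\ell(G,3)$ is the minimum of $P(G,L)$ over all $3$-assignments $L$ for $G$. *)

From mathcomp Require Import all_boot.
Set Implicit Arguments. Unset Strict Implicit. Unset Printing Implicit Defensive.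

(* A (simple) graph is a finite vertex type V with an edge relation e
   (only pairs with e x y matter; loops do not occur in theta graphs). *)

(* ---- Theta graph Theta(l1,l2,l3) ----
   Vertex labels (naturals): end vertices 0 and 1; internal vertices of
   path 1: 2 .. l1 (l1-1 of them); of path 2: l1+1 .. l1+l2-1;
   of path 3: l1+l2 .. l1+l2+l3-2.  Total: l1+l2+l3-1 vertices. *)
Definition theta_paths (l1 l2 l3 : nat) : seq (seq nat) :=
  [:: 0 :: rcons (iota 2 l1.-1) 1;
      0 :: rcons (iota (l1 + 1) l2.-1) 1;
      0 :: rcons (iota (l1 + l2) l3.-1) 1].

Definition theta_adj (l1 l2 l3 : nat) (x y : nat) : bool :=
  has (fun s => has (fun p => (p == (x, y)) || (p == (y, x))) (zip s (behead s)))
      (theta_paths l1 l2 l3).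

Definition theta_V (l1 l2 l3 : nat) : finType := 'I_(l1 + l2 + l3 - 1).

Definition theta_E (l1 l2 l3 : nat) : rel (theta_V l1 l2 l3) :=
  fun x y => theta_adj l1 l2 l3 (val x) (val y).

Definition proper_col (V : finType) (e : rel V) (C : Type) (f : V -> C) : Prop :=
  forall x y, e x y -> f x <> f y.

Definition chrom_poly (V : finType) (e : rel V) (k : nat) : nat :=
  #|[set f : {ffun V -> 'I_k} | [forall x, forall y, e x y ==> (f x != f y)]]|.

Definition k_assignment (V : finType) (k : nat) (L : V -> seq nat) : Prop :=
  forall v, uniq (L v) /\ size (L v) = k.

Definition color_bound (V : finType) (L : V -> seq nat) : nat :=
  (\max_(v : V) \max_(c <- L v) c).+1.

(* Every L-coloring takes values
   below color_bound L, so counting functions into 'I_(color_bound L)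
   (identified with their nat values) counts exactly the L-colorings. *)
Definition list_col_count (V : finType) (e : rel V) (L : V -> seq nat) : nat :=
  #|[set f : {ffun V -> 'I_(color_bound L)} |
       [forall x, (val (f x) \in L x)] &&
       [forall x, forall y, e x y ==> (f x != f y)]]|.

Definition is_list_col_min (V : finType) (e : rel V) (k m : nat) : Prop :=
  (exists L : V -> seq nat, k_assignment k L /\ list_col_count e L = m) /\
  (forall L : V -> seq nat, k_assignment k L -> m <= list_col_count e L).

Arguments theta_E : clear implicits.

From mathcomp Require Import all_boot zify.
Set Implicit Arguments. Unset Strict Implicit. Unset Printing Implicit Defensive.

(* Fixing the colors x, y of the two end vertices splits an L-coloring of Theta(2, l, 2) into
   independent colorings of its three paths, so P(G, L) is the sum over x, y of
   a(x, y) N(x, y) b(x, y), where a and b count the colors of the middle vertices of the short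
   paths that avoid x and y, and N counts the colorings of the long path (l - 1 inner vertices).
   For a 3-assignment, a and b are at least 1, the nine products a b sum to at least 18,
   N(., y) sums to at least 2^l over the colors of an end vertex, and 3 N + 2 >= 2^l (by an
   induction along the path whose invariant depends on the parity of its length). Summing
   (a b - 1) (3 N + 2 - 2^l) >= 0 over the nine pairs gives P(G, L) >= 6 * 2^l - 6, and for odd l
   the lists {0, 1, 2}, i.e. ordinary 3-colorings, attain this bound. *)

Fixpoint seqs_below (B n : nat) : seq (seq nat) :=
  if n is n'.+1 then [seq c :: s | c <- iota 0 B, s <- seqs_below B n'] else [:: [::]].
Arguments seqs_below : simpl never.

Lemma big_seqs_belowS B n (F : seq nat -> nat) :
  \sum_(s <- seqs_below B n.+1) F s =
  \sum_(c <- iota 0 B) \sum_(s <- seqs_below B n) F (c :: s).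
Proof.
rewrite [seqs_below _ _.+1]/seqs_below -/seqs_below.
elim: (iota 0 B) => [|c r IH]; first by rewrite !big_nil.
by rewrite allpairs_cons big_cat big_map IH big_cons.
Qed.

Lemma big_seqs_below1 B (F : seq nat -> nat) :
  \sum_(s <- seqs_below B 1) F s = \sum_(c <- iota 0 B) F [:: c].
Proof. by rewrite big_seqs_belowS; apply: eq_bigr => c _; rewrite big_seq1. Qed.

Lemma mem_seqs_below B n s :
  (s \in seqs_below B n) = (size s == n) && all (fun c => c < B) s.
Proof.
elim: n s => [|n IH] [|c s] //=.
  by apply/negbTE/negP => /allpairsP[[? ?] []].
apply/allpairsP/idP => [[[c' s'] /= [c_lt s_in [-> ->]]] | /andP[size_s /andP[c_lt s_lt]]].
  by move: c_lt s_in; rewrite mem_iota IH eqSS /= => -> /andP[-> ->].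
by exists (c, s); rewrite mem_iota IH -eqSS size_s s_lt.
Qed.

Lemma uniq_seqs_below B n : uniq (seqs_below B n).
Proof.
elim: n => [|n IH] //=.
by apply: allpairs_uniq => // [|[a b] [c d] _ _ [-> ->]]; first exact: iota_uniq.
Qed.

Lemma sum_seqs_below_take_drop B m k (F G : seq nat -> nat) :
  \sum_(t <- seqs_below B (m + k)) F (take m t) * G (drop m t) =
  (\sum_(p <- seqs_below B m) F p) * (\sum_(q <- seqs_below B k) G q).
Proof.
elim: m F => [|m IH] F.
  by rewrite add0n big_seq1 big_distrr; apply: eq_bigr => t _; rewrite take0 drop0.
rewrite addSn !big_seqs_belowS big_distrl; apply: eq_bigr => c _.
exact: (IH (fun p => F (c :: p))).
Qed.

Definition uniq_below (B : nat) (L : seq nat) : bool := uniq L && all (fun c => c < B) L.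

Lemma sum_iota_mem B (L : seq nat) (G : nat -> nat) :
  uniq_below B L -> \sum_(c <- iota 0 B) (c \in L) * G c = \sum_(c <- L) G c.
Proof.
case/andP=> uniqL /allP L_lt.
rewrite (eq_bigr (fun c => if c \in L then G c else 0)) => [|c _]; last by rewrite mulnbl.
rewrite -big_mkcond -big_filter; apply/perm_big/uniq_perm => //.
  by rewrite filter_uniq // iota_uniq.
move=> c; rewrite mem_filter mem_iota /= add0n.
by case cL: (c \in L); rewrite //= L_lt.
Qed.

Definition ffun_seq n B (f : {ffun 'I_n -> 'I_B}) : seq nat := [seq val (f i) | i <- enum 'I_n].

Lemma nth_ffun_seq n B (f : {ffun 'I_n -> 'I_B}) (i : 'I_n) : nth 0 (ffun_seq f) i = f i.
Proof. by rewrite /ffun_seq (nth_map i) ?size_enum_ord // nth_ord_enum. Qed.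

Lemma size_ffun_seq n B (f : {ffun 'I_n -> 'I_B}) : size (ffun_seq f) = n.
Proof. by rewrite /ffun_seq size_map size_enum_ord. Qed.

Lemma card_ffun_seq n B (W : pred (seq nat)) :
  #|[set f : {ffun 'I_n -> 'I_B.+1} | W (ffun_seq f)]| = \sum_(s <- seqs_below B.+1 n) W s.
Proof.
rewrite -sum1_card (eq_bigl (fun f => W (ffun_seq f))) => [|f]; last by rewrite inE.
rewrite big_mkcond -(big_map (@ffun_seq n B.+1) xpredT (fun s => nat_of_bool (W s))).
rewrite [RHS]big_mkcond; apply/perm_big/uniq_perm; last 1 first.
- move=> s; rewrite mem_seqs_below; apply/mapP/idP => [[f _ ->] | /andP[/eqP sz /allP s_lt]].
    by rewrite size_ffun_seq eqxx; apply/allP => c /mapP[i _ ->]; apply: ltn_ord.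
  exists [ffun i : 'I_n => inord (nth 0 s i) : 'I_B.+1]; first by rewrite mem_index_enum.
  apply: (@eq_from_nth _ 0) => [|i]; first by rewrite size_ffun_seq.
  rewrite sz => lt_in; rewrite (nth_ffun_seq _ (Ordinal lt_in)) ffunE inordK //.
  by rewrite s_lt // mem_nth // sz.
- rewrite map_inj_uniq ?index_enum_uniq // => f g fg; apply/ffunP => i; apply: val_inj.
  by rewrite -[val (f i)]nth_ffun_seq -[val (g i)]nth_ffun_seq fg.
- exact: uniq_seqs_below.
Qed.

(* Colorings of a path x, v_1, ..., v_n, y with v_i colored from the i-th list of Ls and the
   ends precolored x and y. *)
Fixpoint path_count (x : nat) (Ls : seq (seq nat)) (y : nat) : nat :=
  if Ls is L :: Ls' then \sum_(c <- L) (c != x) * path_count c Ls' y else x != y.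
Arguments path_count : simpl never.

Lemma path_count_cons x L Ls y :
  path_count x (L :: Ls) y = \sum_(c <- L) (c != x) * path_count c Ls y.
Proof. by []. Qed.

Definition is_path_coloring (x : nat) (Ls : seq (seq nat)) (p : seq nat) (y : nat) : bool :=
  path (fun a b => a != b) x (rcons p y) && all2 (fun c L => c \in L) p Ls.

Lemma sum_path_colorings B x Ls y :
  all (uniq_below B) Ls ->
  \sum_(p <- seqs_below B (size Ls)) is_path_coloring x Ls p y = path_count x Ls y.
Proof.
elim: Ls x => [|L Ls IH] x; first by move=> _; rewrite /= big_seq1 /is_path_coloring /= !andbT.
rewrite [all _ _]/= => /andP[L_ok Ls_ok].
rewrite big_seqs_belowS path_count_cons -(sum_iota_mem _ L_ok); apply: eq_bigr => c _.
rewrite -IH // !big_distrr; apply: eq_bigr => p _.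
rewrite /is_path_coloring /= [c == x]eq_sym.
by case: (x != c); case: (c \in L); rewrite /= ?mul1n ?andbF.
Qed.

Lemma all2_rcons (S T : Type) (r : S -> T -> bool) s t x y :
  all2 r (rcons s x) (rcons t y) = r x y && all2 r s t.
Proof.
rewrite !all2E !size_rcons eqSS.
by case: eqP => [eq_sz | _]; rewrite ?andbF // zip_rcons // all_rcons.
Qed.

Definition proper_along (g : nat -> nat) (q : seq nat) : bool :=
  all (fun e => g e.1 != g e.2) (zip q (behead q)).

Lemma proper_along_cons (g : nat -> nat) a r :
  proper_along g (a :: r) = path (fun c d => c != d) (g a) (map g r).
Proof. by elim: r a => [|b r IH] a //=; rewrite /proper_along /= -IH. Qed.

Lemma mem_zip (S T : eqType) (s : seq S) (t : seq T) e :
  e \in zip s t -> (e.1 \in s) && (e.2 \in t).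
Proof.
elim: s t => [|a s IH] [|b t] //=; rewrite in_cons => /orP[/eqP -> | /IH /andP[es et]].
  by rewrite /= !in_cons !eqxx.
by rewrite !in_cons es et !orbT.
Qed.

Lemma adjacent_proper_along (N : nat) (Ps : seq (seq nat)) (g : nat -> nat) :
  all (all (fun i => i < N)) Ps ->
  (forall a b, a < N -> b < N ->
     has (fun q => has (fun e => (e == (a, b)) || (e == (b, a))) (zip q (behead q))) Ps ->
     g a != g b) <-> all (proper_along g) Ps.
Proof.
move=> /allP Ps_lt; split => [g_ok | /allP Ps_ok a b _ _ /hasP[q Pq /hasP[e qe e_ab]]].
  apply/allP => q Pq; apply/allP => -[a b] qe /=.
  have /andP[aq /mem_behead bq] := mem_zip qe.
  have /allP q_lt := Ps_lt q Pq.
  apply: g_ok; rewrite ?q_lt //.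
  by apply/hasP; exists q => //; apply/hasP; exists (a, b); rewrite ?eqxx.
move: (allP (Ps_ok q Pq) e qe).
by case/orP: e_ab => /eqP -> //=; rewrite eq_sym.
Qed.

(* L-colorings of Theta(2, size Ls + 1, 2) with K and M on the end vertices, La and Lb on the
   middle vertices of the short paths and Ls along the long path. *)
Definition theta_count (K M La : seq nat) (Ls : seq (seq nat)) (Lb : seq nat) : nat :=
  \sum_(x <- K) \sum_(y <- M)
    path_count x [:: La] y * path_count x Ls y * path_count x [:: Lb] y.

Section ThetaColorings.

Variable k : nat.
Local Notation V := (theta_V 2 k.+1 2).
Variable L : V -> seq nat.

Lemma card_theta_V : 2 + k.+1 + 2 - 1 = k.+4.
Proof. by lia. Qed.

Definition list_at (i : nat) : seq nat := oapp L [::] (insub i : option V).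

Lemma list_at_val (v : V) : list_at (val v) = L v.
Proof. by rewrite /list_at valK. Qed.

Definition inner_lists : seq (seq nat) := [seq list_at i | i <- iota 3 k].

Lemma size_inner_lists : size inner_lists = k.
Proof. by rewrite size_map size_iota. Qed.

Definition theta_coloring (s : seq nat) : bool :=
  all2 (fun c L => c \in L) s [seq L v | v <- enum V] &&
  all (proper_along (nth 0 s)) (theta_paths 2 k.+1 2).

Lemma theta_listsE :
  [seq L v | v <- enum V] =
  [:: list_at 0, list_at 1, list_at 2 & rcons inner_lists (list_at k.+3)].
Proof.
rewrite (eq_map (g := list_at \o val)) => [|v]; last by rewrite /= list_at_val.
rewrite map_comp val_enum_ord card_theta_V.
have -> : k.+4 = 3 + k + 1 by rewrite addn1.
by rewrite !iotaD !map_cat cats1.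
Qed.

Lemma theta_paths_proper (g : nat -> nat) :
  all (proper_along g) (theta_paths 2 k.+1 2) =
  [&& (g 0 != g 2) && (g 2 != g 1),
      path (fun a b => a != b) (g 0) (rcons [seq g i | i <- iota 3 k] (g 1))
    & (g 0 != g k.+3) && (g k.+3 != g 1)].
Proof. by rewrite /= !proper_along_cons /= map_rcons !andbT. Qed.

Lemma theta_coloring_split x y z m w : size m = k ->
  theta_coloring [:: x, y, z & rcons m w] =
  [&& x \in list_at 0, y \in list_at 1, is_path_coloring x [:: list_at 2] [:: z] y,
      is_path_coloring x inner_lists m y
    & is_path_coloring x [:: list_at k.+3] [:: w] y].
Proof.
move=> size_m.
have nth_w : nth 0 [:: x, y, z & rcons m w] k.+3 = w by rewrite /= nth_rcons size_m ltnn eqxx.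
have nth_m : [seq nth 0 [:: x, y, z & rcons m w] i | i <- iota 3 k] = m.
  by rewrite map_nth_iota /= ?size_rcons ?size_m ?subnn // drop0 -cats1 take_size_cat.
rewrite /theta_coloring theta_listsE theta_paths_proper nth_w nth_m /=.
rewrite all2_rcons /is_path_coloring /= !andbT.
by do ![case: (_ \in _) | case: (_ != _) | case: path | case: all2].
Qed.

Lemma theta_paths_lt : all (all (fun i => i < 2 + k.+1 + 2 - 1)) (theta_paths 2 k.+1 2).
Proof.
rewrite card_theta_V /= !all_rcons /= !andbT addnS ltnSn andbT.
by apply/allP => i; rewrite mem_iota; lia.
Qed.

Lemma theta_coloring_ffun_seq B (f : {ffun V -> 'I_B}) :
  theta_coloring (ffun_seq f) =
  [forall v, val (f v) \in L v] && [forall u, forall v, theta_E 2 k.+1 2 u v ==> (f u != f v)].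
Proof.
congr andb.
  rewrite all2E !size_map eqxx zip_map all_map.
  by apply/allP/forallP => [ok v | ok v _]; [exact: ok (mem_enum _ v) | exact: ok].
apply/idP/forallP => [| ok].
  move/(adjacent_proper_along _ theta_paths_lt) => ok u; apply/forallP => v; apply/implyP.
  by move/(ok _ _ (ltn_ord u) (ltn_ord v)); rewrite !nth_ffun_seq.
apply/(adjacent_proper_along _ theta_paths_lt) => a b lt_a lt_b adj_ab.
have /forallP/(_ (Ordinal lt_b))/implyP := ok (Ordinal lt_a).
by rewrite (nth_ffun_seq f (Ordinal lt_a)) (nth_ffun_seq f (Ordinal lt_b)); apply.
Qed.

Section Counting.

Variable B : nat.
Hypothesis L_ok : forall v, uniq_below B (L v).

Lemma list_at_ok i : uniq_below B (list_at i).
Proof. by rewrite /list_at; case: insub. Qed.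

Lemma sum_theta_colorings_at_ends x y :
  \sum_(z <- iota 0 B) \sum_(t <- seqs_below B k.+1) theta_coloring [:: x, y, z & t] =
  (x \in list_at 0) * ((y \in list_at 1) *
    (path_count x [:: list_at 2] y * path_count x inner_lists y *
     path_count x [:: list_at k.+3] y)).
Proof.
have sum_paths := @sum_path_colorings B x _ y.
have inner_ok : all (uniq_below B) inner_lists.
  by apply/allP => _ /mapP[i _ ->]; apply: list_at_ok.
have single_ok i : all (uniq_below B) [:: list_at i] by rewrite /= list_at_ok.
have tail z : \sum_(t <- seqs_below B k.+1) theta_coloring [:: x, y, z & t] =
    (x \in list_at 0) * ((y \in list_at 1) * (is_path_coloring x [:: list_at 2] [:: z] y *
      ((\sum_(p <- seqs_below B k) is_path_coloring x inner_lists p y) *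
       (\sum_(q <- seqs_below B 1) is_path_coloring x [:: list_at k.+3] q y)))).
  rewrite -sum_seqs_below_take_drop addn1 !big_distrr [LHS]big_seq [RHS]big_seq.
  apply: eq_bigr => t; rewrite mem_seqs_below => /andP[/eqP size_t _].
  case/lastP: t size_t => [//|m w]; rewrite size_rcons => -[size_m].
  rewrite theta_coloring_split // -cats1 take_size_cat // drop_size_cat //.
  by rewrite /= !mulnb.
rewrite (eq_bigr _ (fun z _ => tail z)) -!big_distrr -big_distrl /=.
rewrite -[path_count x [:: list_at 2] y]sum_paths // -[path_count x inner_lists y]sum_paths //.
rewrite -[path_count x [:: list_at k.+3] y]sum_paths // size_map size_iota !big_seqs_below1.
by rewrite !mulnA.
Qed.

End Counting.

Lemma card_theta_colorings B :
  (forall v, uniq_below B.+1 (L v)) ->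
  #|[set f : {ffun V -> 'I_B.+1} | [forall v, val (f v) \in L v] &&
      [forall u, forall v, theta_E 2 k.+1 2 u v ==> (f u != f v)]]| =
  theta_count (list_at 0) (list_at 1) (list_at 2) inner_lists (list_at k.+3).
Proof.
move=> L_ok.
have -> : [set f : {ffun V -> 'I_B.+1} | [forall v, val (f v) \in L v] &&
      [forall u, forall v, theta_E 2 k.+1 2 u v ==> (f u != f v)]] =
    [set f | theta_coloring (ffun_seq f)].
  by apply/setP => f; rewrite !inE theta_coloring_ffun_seq.
rewrite card_ffun_seq card_theta_V big_seqs_belowS /theta_count.
rewrite -(sum_iota_mem _ (list_at_ok L_ok 0)); apply: eq_bigr => x _.
rewrite big_seqs_belowS -(sum_iota_mem _ (list_at_ok L_ok 1)) big_distrr.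
by apply: eq_bigr => y _; rewrite big_seqs_belowS sum_theta_colorings_at_ends.
Qed.

End ThetaColorings.

Definition triple (L : seq nat) : bool := uniq L && (size L == 3).

Lemma tripleP L :
  triple L -> exists a b c, L = [:: a; b; c] /\ [/\ a != b, a != c & b != c].
Proof.
case: L => [|a [|b [|c [|? ?]]]]; rewrite /triple /= ?andbF //= !inE.
by rewrite negb_or andbT => /andP[/andP[/andP[ab ac] bc] _]; exists a, b, c.
Qed.

Lemma sum_neq_triple D z : triple D -> 2 <= \sum_(d <- D) (z != d).
Proof. by case/tripleP=> [a [b [c [-> [ab ac bc]]]]]; rewrite !big_cons big_nil; lia. Qed.

Lemma weighted_sum_ge (u1 u2 u3 p1 p2 p3 q : nat) :
  0 < u1 -> 0 < u2 -> 0 < u3 -> 3 < u1 + u2 + u3 -> q <= p1 + p2 + p3 ->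
  q <= 3 * p1 + 1 -> q <= 3 * p2 + 1 -> q <= 3 * p3 + 1 ->
  4 * q <= 3 * (u1 * p1 + u2 * p2 + u3 * p3) + 1.
Proof.
move=> u1_gt0 u2_gt0 u3_gt0 u_gt3 q_le q_le1 q_le2 q_le3.
have := leq_pmull p1 u1_gt0; have := leq_pmull p2 u2_gt0; have := leq_pmull p3 u3_gt0.
have : [|| 1 < u1, 1 < u2 | 1 < u3] by lia.
case/or3P=> [u1_gt1 | u2_gt1 | u3_gt1].
- by have := leq_mul u1_gt1 (leqnn p1); lia.
- by have := leq_mul u2_gt1 (leqnn p2); lia.
- by have := leq_mul u3_gt1 (leqnn p3); lia.
Qed.

Section PathCountBounds.

Variable y : nat.

Lemma path_count_triple a b c Ls x :
  path_count x ([:: a; b; c] :: Ls) y =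
  (a != x) * path_count a Ls y + (b != x) * path_count b Ls y + (c != x) * path_count c Ls y.
Proof. by rewrite path_count_cons !big_cons big_nil addn0 addnA. Qed.

Lemma sum_path_count_ge Ls D :
  all triple Ls -> triple D -> 2 ^ (size Ls).+1 <= \sum_(d <- D) path_count d Ls y.
Proof.
elim: Ls D => [|L Ls IH] D.
  move=> _ tripleD; rewrite (eq_bigr (fun d => (y != d) : nat)) ?sum_neq_triple // => d _.
  by rewrite /path_count eq_sym.
rewrite [all _ _]/= => /andP[tripleL tripleLs] tripleD.
under eq_bigr do rewrite path_count_cons.
rewrite exchange_big expnS /=.
apply: leq_trans (leq_mul (leqnn 2) (IH L tripleLs tripleL)) _.
rewrite big_distrr leq_sum // => c _; rewrite -big_distrl leq_mul //=.
exact: sum_neq_triple.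
Qed.

Lemma path_count_cons_ge L Ls x : triple L ->
  exists a b, a != b /\ path_count a Ls y + path_count b Ls y <= path_count x (L :: Ls) y.
Proof.
case/tripleP=> [a [b [c [-> [ab ac bc]]]]]; rewrite path_count_triple.
have [<-|xa] := eqVneq a x.
  by exists b, c; rewrite ![_ == a]eq_sym (negbTE ab) (negbTE ac) mul0n add0n !mul1n.
have [<-|xb] := eqVneq b x.
  by exists a, c; rewrite [c == b]eq_sym (negbTE bc) mul0n addn0 !mul1n.
by exists a, b; rewrite !mul1n leq_addr.
Qed.

(* The parity-sensitive bounds are the ones that survive the induction; the lists {0, 1, 2}
   attain them. *)
Lemma path_count_parity Ls : all triple Ls ->
  (odd (size Ls) -> forall x, 2 ^ (size Ls).+1 <= 3 * path_count x Ls y + 1) /\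
  (~~ odd (size Ls) -> forall x x', x != x' ->
     2 ^ (size Ls).+2 <= 3 * (path_count x Ls y + path_count x' Ls y) + 1).
Proof.
elim: Ls => [|L Ls IH].
  split=> // _ x x' xx'; rewrite /path_count /=.
  by case: (eqVneq x y) => [<-|_]; [rewrite eq_sym xx' | case: (x' != y)].
rewrite [all _ _]/= => /andP[tripleL tripleLs]; have [odd_case even_case] := IH tripleLs.
rewrite [size _]/= [odd _]/=; case: (boolP (odd (size Ls))) => [n_odd | n_even]; split=> // _.
  move=> x x' xx'.
  have := sum_path_count_ge tripleLs tripleL.
  case/tripleP: tripleL => [a [b [c [-> [ab ac bc]]]]].
  rewrite !big_cons big_nil addn0 addnA => sum_ge.
  rewrite !path_count_triple.
  set pa := path_count a Ls y; set pb := path_count b Ls y; set pc := path_count c Ls y.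
  have -> : forall u1 u2 u3 v1 v2 v3 : nat,
    u1 * pa + u2 * pb + u3 * pc + (v1 * pa + v2 * pb + v3 * pc) =
    (u1 + v1) * pa + (u2 + v2) * pb + (u3 + v3) * pc by move=> *; rewrite !mulnDl; lia.
  have -> : 2 ^ (size Ls).+3 = 4 * 2 ^ (size Ls).+1 by rewrite !expnS !mulnA.
  by apply: weighted_sum_ge; first [exact: sum_ge | exact: odd_case | lia].
move=> x; have [a [b [ab le_ab]]] := path_count_cons_ge Ls x tripleL.
by rewrite expnS; apply: leq_trans (even_case n_even a b ab) _; rewrite leq_add2r leq_mul2l.
Qed.

Lemma path_count_ge Ls x : all triple Ls -> 2 ^ (size Ls).+1 <= 3 * path_count x Ls y + 2.
Proof.
case: Ls => [|L Ls]; first by rewrite leq_addl.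
move=> triples; case/andP: (triples) => tripleL tripleLs.
case: (boolP (odd (size Ls))) => n_odd.
  have [a [b [_ le_ab]]] := path_count_cons_ge Ls x tripleL.
  have [odd_case _] := path_count_parity tripleLs.
  rewrite [size _]/= expnS; have := odd_case n_odd a; have := odd_case n_odd b; lia.
have [odd_case _] := path_count_parity triples.
by apply: leq_trans (odd_case n_odd x) _; rewrite leq_add2l.
Qed.

End PathCountBounds.

Lemma path_count1 x L y : path_count x [:: L] y = \sum_(z <- L) (z != x) * (z != y).
Proof. by []. Qed.

Lemma path_count1_ge1 L x y : triple L -> 1 <= path_count x [:: L] y.
Proof.
by case/tripleP=> [a [b [c [-> [ab ac bc]]]]]; rewrite path_count1 !big_cons big_nil; lia.
Qed.

Lemma path_count1_diag L x : triple L -> 2 <= path_count x [:: L] x.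
Proof.
by case/tripleP=> [a [b [c [-> [ab ac bc]]]]]; rewrite path_count1 !big_cons big_nil; lia.
Qed.

Lemma sum_path_count1 K M L :
  \sum_(x <- K) \sum_(y <- M) path_count x [:: L] y =
  \sum_(z <- L) (\sum_(x <- K) (z != x)) * (\sum_(y <- M) (z != y)).
Proof.
under eq_bigr do rewrite exchange_big /=.
rewrite exchange_big; apply: eq_bigr => z _; rewrite big_distrlr.
by apply: eq_bigr => x _; apply: eq_bigr => y _; rewrite eq_sym.
Qed.

Lemma sum_neq_notin D z : triple D -> z \notin D -> \sum_(d <- D) (z != d) = 3.
Proof.
case/tripleP=> [a [b [c [-> _]]]]; rewrite !inE !negb_or => /and3P[za zb zc].
by rewrite !big_cons big_nil za zb zc.
Qed.

Lemma mul_sum_neq_ge z K M : triple K -> triple M ->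
  4 + 2 * ~~ ((z \in K) && (z \in M)) <=
  (\sum_(x <- K) (z != x)) * (\sum_(y <- M) (z != y)).
Proof.
move=> tK tM; have := leq_mul (sum_neq_triple z tK) (sum_neq_triple z tM).
case: (boolP (z \in K)) => zK; case: (boolP (z \in M)) => zM //= _;
  rewrite ?(sum_neq_notin tK zK) ?(sum_neq_notin tM zM) ?leq_mul2l ?leq_mul2r //=.
- exact: (leq_mul (sum_neq_triple z tK) (leqnn 3)).
- exact: (leq_mul (leqnn 3) (sum_neq_triple z tM)).
Qed.

Lemma sum_path_count1_ge K M L : triple K -> triple M -> triple L -> ~~ all (mem M) K ->
  14 <= \sum_(x <- K) \sum_(y <- M) path_count x [:: L] y.
Proof.
move=> tK tM tL not_KM; rewrite sum_path_count1.
have [z zL zKM] : exists2 z, z \in L & ~~ ((z \in K) && (z \in M)).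
  apply/hasP; apply: contraR not_KM => /hasPn LKM.
  have LK : {subset L <= K} by move=> z /LKM; rewrite negbK => /andP[].
  have size_KL : size K <= size L by case/andP: tK tL => _ /eqP -> /andP[_ /eqP ->].
  have [_ LK_eq] := uniq_min_size (proj1 (andP tL)) LK size_KL.
  by apply/allP => x; rewrite -LK_eq => /LKM; rewrite negbK => /andP[].
have f_ge4 z' : 4 <= (\sum_(x <- K) (z' != x)) * (\sum_(y <- M) (z' != y)).
  exact: leq_trans (leq_addr _ _) (mul_sum_neq_ge z' tK tM).
have := mul_sum_neq_ge z tK tM; rewrite zKM => f_z.
case/tripleP: tL zL => [z1 [z2 [z3 [-> _]]]]; rewrite !inE !big_cons big_nil addn0.
have := f_ge4 z1; have := f_ge4 z2; have := f_ge4 z3.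
by move=> h3 h2 h1; case/or3P=> /eqP zi; rewrite zi in f_z; lia.
Qed.

Lemma row_path_count1_mul_ge x M La Lb : triple M -> triple La -> triple Lb -> x \in M ->
  6 <= \sum_(y <- M) path_count x [:: La] y * path_count x [:: Lb] y.
Proof.
move=> tM tLa tLb; case/tripleP: tM => [y1 [y2 [y3 [-> _]]]].
have ge1 y : 1 <= path_count x [:: La] y * path_count x [:: Lb] y.
  by rewrite muln_gt0 !path_count1_ge1.
have diag := leq_mul (path_count1_diag x tLa) (path_count1_diag x tLb).
rewrite !inE !big_cons big_nil addn0.
have := ge1 y1; have := ge1 y2; have := ge1 y3.
by move=> h3 h2 h1; case/or3P=> /eqP xi; subst; lia.
Qed.

Lemma leq_add_mul p q : 0 < p -> 0 < q -> p + q <= p * q + 1.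
Proof. by case: p q => [|p] [|q] //= _ _; rewrite mulSn mulnS; lia. Qed.

Lemma sum_path_count1_mul_ge K M La Lb :
  triple K -> triple M -> triple La -> triple Lb ->
  18 <= \sum_(x <- K) \sum_(y <- M) path_count x [:: La] y * path_count x [:: Lb] y.
Proof.
move=> tK tM tLa tLb; have [KM | not_KM] := boolP (all (mem M) K).
  case/tripleP: tK KM => [x1 [x2 [x3 [-> _]]]] /and4P[x1M x2M x3M _].
  rewrite !big_cons big_nil addn0.
  have := row_path_count1_mul_ge tM tLa tLb x1M.
  have := row_path_count1_mul_ge tM tLa tLb x2M.
  have := row_path_count1_mul_ge tM tLa tLb x3M.
  lia.
have := sum_path_count1_ge tK tM tLa not_KM; have := sum_path_count1_ge tK tM tLb not_KM.
have le_sum : \sum_(x <- K) \sum_(y <- M) (path_count x [:: La] y + path_count x [:: Lb] y) <=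
    \sum_(x <- K) \sum_(y <- M) (path_count x [:: La] y * path_count x [:: Lb] y + 1).
  by do 2!apply: leq_sum => ? _; apply: leq_add_mul; apply: path_count1_ge1.
case/tripleP: tK le_sum => [x1 [x2 [x3 [-> _]]]]; case/tripleP: tM => [y1 [y2 [y3 [-> _]]]].
rewrite !big_cons !big_nil; lia.
Qed.

(* (a - 1) (3 n + 2 - q) >= 0 *)
Lemma theta_term_ge a n q : 0 < a -> q <= 3 * n + 2 ->
  3 * n + a * q + 2 <= 3 * (a * n) + 2 * a + q.
Proof. by case: a => // a _ le_q; have := leq_mul (leqnn a) le_q; rewrite !mulSn; lia. Qed.

(* (q - 2) (s - 18) >= 0 *)
Lemma corner_ge q s : 2 <= q -> 18 <= s -> 18 * q + 2 * s <= q * s + 36.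
Proof.
move=> /subnK <- /subnK <-.
by move: (q - 2) (s - 18) => m t; rewrite mulnDl !mulnDr; lia.
Qed.

Lemma theta_count_ge K M La Ls Lb :
  triple K -> triple M -> triple La -> triple Lb -> all triple Ls ->
  6 * 2 ^ (size Ls).+1 <= theta_count K M La Ls Lb + 6.
Proof.
move=> tK tM tLa tLb tLs.
have sumA := sum_path_count1_mul_ge tK tM tLa tLb.
have sumN y := sum_path_count_ge y tLs tK.
have term x y := theta_term_ge
  (leq_mul (path_count1_ge1 x y tLa) (path_count1_ge1 x y tLb)) (path_count_ge y x tLs).
have q_ge2 : 2 <= 2 ^ (size Ls).+1 by rewrite expnS leq_pmulr ?expn_gt0.
have := corner_ge q_ge2 sumA.
move: (2 ^ (size Ls).+1) sumN term => q sumN term.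
case/tripleP: tK sumN => [x1 [x2 [x3 [-> _]]]] sumN; case/tripleP: tM => [y1 [y2 [y3 [-> _]]]].
have := sumN y1; have := sumN y2; have := sumN y3.
have := term x1 y1; have := term x1 y2; have := term x1 y3.
have := term x2 y1; have := term x2 y2; have := term x2 y3.
have := term x3 y1; have := term x3 y2; have := term x3 y3.
rewrite /theta_count !big_cons !big_nil; lia.
Qed.

Definition colors3 : seq nat := [:: 0; 1; 2].

(* Path counts for the lists {0, 1, 2}, with ends of equal, resp. distinct, colors. *)
Fixpoint uniform_path_counts (n : nat) : nat * nat :=
  if n is n'.+1 then let: (a, b) := uniform_path_counts n' in (2 * b, a + b) else (0, 1).

Lemma uniform_path_countsE n :
  let: (a, b) := uniform_path_counts n in a + 2 * b = 2 ^ n.+1 /\ a + ~~ odd n = b + odd n.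
Proof.
elim: n => [|n IH] //=; case: (uniform_path_counts n) IH => a b [sum_ab diff_ab].
by rewrite negbK expnS -sum_ab; split; lia.
Qed.

Lemma path_count_uniform Ls x y : all (pred1 colors3) Ls -> x < 3 -> y < 3 ->
  path_count x Ls y =
  if x == y then (uniform_path_counts (size Ls)).1 else (uniform_path_counts (size Ls)).2.
Proof.
elim: Ls x => [|L Ls IH] x; first by rewrite /path_count; case: eqVneq.
rewrite [all _ _]/= => /andP[/eqP -> uniform_Ls] x_lt y_lt.
rewrite path_count_cons !big_cons big_nil !IH //=.
case: (uniform_path_counts (size Ls)) => a b /=; clear IH.
by case: x x_lt => [|[|[|x]]] //; case: y y_lt => [|[|[|y]]] //= _ _; lia.
Qed.

Lemma theta_count_uniform Ls : all (pred1 colors3) Ls -> ~~ odd (size Ls) ->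
  theta_count colors3 colors3 colors3 Ls colors3 + 6 = 6 * 2 ^ (size Ls).+1.
Proof.
move=> uniform_Ls n_even.
rewrite /theta_count !big_cons !big_nil !path_count_uniform //=.
have := uniform_path_countsE (size Ls); rewrite n_even.
by case: (uniform_path_counts (size Ls)) => a b /= [sum_ab diff_ab]; lia.
Qed.

Lemma color_bound_gt (V : finType) (L : V -> seq nat) v c : c \in L v -> c < color_bound L.
Proof. by move=> cL; rewrite ltnS; apply: leq_trans (leq_bigmax v); apply: leq_bigmax_seq. Qed.

Lemma list_col_count_theta k (L : theta_V 2 k.+1 2 -> seq nat) :
  (forall v, uniq (L v)) ->
  list_col_count (theta_E 2 k.+1 2) L =
  theta_count (list_at L 0) (list_at L 1) (list_at L 2) (inner_lists L) (list_at L k.+3).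
Proof.
move=> uniqL; apply: card_theta_colorings => v.
by rewrite /uniq_below uniqL; apply/allP => c /color_bound_gt.
Qed.

Lemma list_at_const k (C : seq nat) i :
  i < k.+4 -> list_at (fun _ : theta_V 2 k.+1 2 => C) i = C.
Proof. by rewrite -(card_theta_V k) => lt_i; rewrite /list_at insubT. Qed.

Lemma inner_lists_const k (C : seq nat) :
  all (pred1 C) (inner_lists (fun _ : theta_V 2 k.+1 2 => C)).
Proof.
apply/allP => ? /mapP[i]; rewrite mem_iota => /andP[_ lt_i] ->.
by rewrite /= list_at_const //; lia.
Qed.

Lemma chrom_poly_theta k :
  chrom_poly (theta_E 2 k.+1 2) 3 = list_col_count (theta_E 2 k.+1 2) (fun _ => colors3).
Proof.
rewrite list_col_count_theta // -(@card_theta_colorings k _ 2) //.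
congr #|pred_of_set _|; apply/setP => f; rewrite !inE.
have -> // : [forall v, val (f v) \in colors3].
by apply/forallP => v; have : val (f v) < 3 := ltn_ord (f v); case: (val (f v)) => [|[|[|]]].
Qed.

Lemma chrom_poly_theta_even k :
  ~~ odd k -> chrom_poly (theta_E 2 k.+1 2) 3 + 6 = 6 * 2 ^ k.+1.
Proof.
move=> k_even; rewrite chrom_poly_theta list_col_count_theta // !list_at_const //.
rewrite -(size_inner_lists (fun _ : theta_V 2 k.+1 2 => colors3)).
by rewrite theta_count_uniform ?inner_lists_const ?size_inner_lists.
Qed.

Lemma list_col_count_theta_ge k (L : theta_V 2 k.+1 2 -> seq nat) :
  k_assignment 3 L -> 6 * 2 ^ k.+1 <= list_col_count (theta_E 2 k.+1 2) L + 6.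
Proof.
move=> L_3; rewrite list_col_count_theta => [|v]; last by case: (L_3 v).
have triple_at i : i < k.+4 -> triple (list_at L i).
  rewrite -(card_theta_V k) => lt_i; rewrite /list_at insubT /triple.
  by case: (L_3 (Sub i lt_i)) => -> ->.
have inner_triples : all triple (inner_lists L).
  by apply/allP => ? /mapP[i]; rewrite mem_iota => /andP[_ lt_i] ->; apply: triple_at; lia.
have := theta_count_ge (triple_at 0 isT) (triple_at 1 isT) (triple_at 2 isT)
  (triple_at k.+3 (ltnSn _)) inner_triples.
by rewrite size_inner_lists.
Qed.

Theorem lemma2p9 (l2 : nat) :
  odd l2 -> 3 <= l2 ->
  is_list_col_min (theta_E 2 l2 2) 3 (chrom_poly (theta_E 2 l2 2) 3).
Proof.
case: l2 => [//|k] /= k_even _.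
split=> [|L L_3]; first by exists (fun _ => colors3); rewrite chrom_poly_theta.
by have := list_col_count_theta_ge L_3; have := chrom_poly_theta_even k_even; lia.
Qed.
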